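(* Let $n\geq 2$. If $\prec_1,\ldots,\prec_n$ are linear orders on $D_n$ which realize the product order $<$, then there is a permutation $\sigma\in S_n$ such that for all $i\leq n$ and all $\mathbf{a},\mathbf{b}\in D_n$, $a_i<b_i$ if and only if $\mathbf{a}\prec_{\sigma(i)}\mathbf{b}$.
   Context: Fix $n\geq 2$ and a set $D_n\subseteq\mathbb{Q}^n$ which is dense in $\mathbb{Q}^n$ (product topology) and such that no two distinct points of $D_n$ share a common coordinate. The product order: $\mathbf{a}<\mathbf{b}$ iff $a_i\leq b_i$ for all $i$ and $\mathbf{a}\neq\mathbf{b}$. Linear orders realize $<$ if their intersection is $<$. $S_n$ is the permutation group of $\{1,\ldots,n\}$. *)

From mathcomp Require Import all_boot all_order all_algebra all_fingroup.
Set Implicit Arguments. Unset Strict Implicit. Unset Printing Implicit Defensive.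
Import Order.TTheory GRing.Theory Num.Theory.
Local Open Scope ring_scope.

Definition pt (n : nat) := {ffun 'I_n -> rat}.

Definition prod_lt (n : nat) (a b : pt n) : Prop :=
  (forall i, a i <= b i) /\ a <> b.

(* D is dense in Q^n for the product topology: every basic open box
   (product of open intervals (x_i - e, x_i + e), e > 0) meets D. *)
Definition dense_Qn (n : nat) (D : pt n -> Prop) : Prop :=
  forall (x : pt n) (e : rat), 0 < e ->
    exists d, D d /\ forall i, `|d i - x i| < e.

Definition distinct_coords (n : nat) (D : pt n -> Prop) : Prop :=
  forall a b, D a -> D b -> a <> b -> forall i, a i <> b i.

Definition strict_linear_order_on (T : Type) (D : T -> Prop) (R : T -> T -> Prop) : Prop :=
  (forall a, D a -> ~ R a a) /\
  (forall a b c, D a -> D b -> D c -> R a b -> R b c -> R a c) /\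
  (forall a b, D a -> D b -> a <> b -> R a b \/ R b a).

Definition realizes (n : nat) (D : pt n -> Prop) (prec : 'I_n -> pt n -> pt n -> Prop) : Prop :=
  forall a b, D a -> D b -> (prod_lt a b <-> forall k, prec k a b).

(* Call (u, v) an i-flip when v is below u in coordinate i and above it in all
   other coordinates.  Some order of the family puts v before u (otherwise u < v
   in the product order), and every order is monotone along the product order,
   so an order reversing a flip reverses every flip enclosing it.  Density gives
   flips (x_p, y_p), one for each coordinate p, with x_p <= y_q for p <> q; no
   order can reverse two of them (it would contain a cycle), so by pigeonhole
   each is reversed by exactly one order.  Passing from one i-flip to another
   through enclosing flips, this order sigma(i) reverses every i-flip; since any
   a, b with a_i < b_i enclose an i-flip, a_i < b_i forces a before b in sigma(i),
   and the converse follows from asymmetry and distinct coordinates. *)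

From mathcomp Require Import all_boot all_order all_algebra all_fingroup.
From mathcomp Require Import lra.
From Stdlib Require Import Classical.
Import Order.TTheory GRing.Theory Num.Theory.
Set Implicit Arguments. Unset Strict Implicit. Unset Printing Implicit Defensive.
Local Open Scope ring_scope.

Lemma fin_rel_functional (T : finType) (R : T -> T -> Prop) :
  (forall p, exists k, R p k) -> (forall p q k, R p k -> R q k -> p = q) ->
  forall p k k', R p k -> R p k' -> k = k'.
Proof.
move=> Rtot Rinj p k k' Rpk Rpk'.
have [f Rf] := fin_all_exists Rtot.
have f_inj : injective f by move=> q q' fqq'; apply: Rinj (Rf q) _; rewrite fqq'.
have [g _ gK] := injF_bij f_inj.
suff kE l : R p l -> l = f p by rewrite (kE k Rpk) (kE k' Rpk').
by move=> Rpl; rewrite -[l]gK; congr f; apply: Rinj (Rf (g l)) _; rewrite gK.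
Qed.

Lemma strict_linear_order_on_asym (T : Type) (D : T -> Prop) (R : T -> T -> Prop) (a b : T) :
  strict_linear_order_on D R -> D a -> D b -> R a b -> R b a -> False.
Proof. by case=> irr [tr _] Da Db Rab Rba; apply: (irr a Da); apply: (tr a b a). Qed.

Definition pt_le n (a b : pt n) := forall r, a r <= b r.

Definition flip n (i : 'I_n) (u v : pt n) := v i < u i /\ forall j, j != i -> u j < v j.

Section ProductOrderRealizer.

Variables (n : nat) (D : pt n -> Prop) (prec : 'I_n -> pt n -> pt n -> Prop).
Hypothesis dense : dense_Qn D.

Lemma dense_box (lo hi : 'I_n -> rat) :
  (forall r, lo r < hi r) -> exists d, D d /\ forall r, lo r < d r < hi r.
Proof.
move=> lohi; pose e := \big[Order.min/1]_r (hi r - lo r).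
have e_gt0 : 0 < e by apply/bigmin_gtP; split=> // r _; rewrite subr_gt0.
have e2_gt0 : 0 < e / 2 by rewrite divr_gt0.
have [d [Dd dc]] := dense [ffun r => (lo r + hi r) / 2] e2_gt0.
exists d; split=> // r; have := dc r; rewrite ffunE ltr_norml => /andP[dl dh].
have er : e <= hi r - lo r by exact: bigmin_le.
by apply/andP; split; lra.
Qed.

Lemma dense_box_at (i : 'I_n) (a b : rat) (l h : 'I_n -> rat) :
  a < b -> (forall j, j != i -> l j < h j) ->
  exists d, [/\ D d, a < d i < b & forall j, j != i -> l j < d j < h j].
Proof.
move=> ab lh.
have [|d [Dd dP]] := dense_box (lo := fun r => if r == i then a else l r)
                               (hi := fun r => if r == i then b else h r).
  by move=> r; case: eqVneq => [//|/lh].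
exists d; split=> // [|j /negPf ji]; first by have := dP i; rewrite eqxx.
by have := dP j; rewrite ji.
Qed.

Lemma exists_flip_inside (i : 'I_n) (a b : pt n) : a i < b i ->
  exists u v, [/\ D u, D v, flip i u v, pt_le u b & pt_le a v].
Proof.
move=> ab; pose m := (a i + b i) / 2.
have [mb am] : m < b i /\ a i < m by rewrite /m; split; lra.
have [u [Du /andP[mu ub] uj]] := dense_box_at (i := i) mb
  (l := fun j => Num.min (a j) (b j) - 1) (h := fun j => Num.min (a j) (b j))
  (fun j _ => ltac:(simpl; lra)).
have [v [Dv /andP[av vm] vj]] := dense_box_at (i := i) am
  (l := fun j => Num.max (a j) (b j)) (h := fun j => Num.max (a j) (b j) + 1)
  (fun j _ => ltac:(simpl; lra)).
have {}uj j : j != i -> u j < a j /\ u j < b j.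
  by move=> /uj /andP[_]; rewrite lt_min => /andP.
have {}vj j : j != i -> a j < v j /\ b j < v j.
  by move=> /vj /andP[+ _]; rewrite gt_max => /andP.
exists u, v; split=> //.
- split=> [|j /[dup] /uj[uja _] /vj[ajv _]]; first exact: lt_trans vm mu.
  exact: lt_trans uja ajv.
- by move=> r; case: (eqVneq r i) => [->|/uj[_ /ltW //]]; apply: ltW.
- by move=> r; case: (eqVneq r i) => [->|/vj[/ltW //]]; apply: ltW.
Qed.

Lemma exists_flip_outside (i : 'I_n) (u v : pt n) (lo hi : rat) : flip i u v ->
  exists u' v', [/\ D u', D v', flip i u' v', pt_le u u' /\ pt_le v' v
                  & v' i < lo /\ hi < u' i].
Proof.
move=> [vu uv]; pose m j := (u j + v j) / 2.
have umv j : j != i -> u j < m j /\ m j < v j by move/uv; rewrite /m; split; lra.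
have [u' [Du' /andP[uu' _] u'j]] := dense_box_at (i := i)
  (a := Num.max (u i) hi) (b := Num.max (u i) hi + 1) (l := u) (h := m)
  ltac:(lra) (fun j ji => (umv j ji).1).
have [v' [Dv' /andP[_ v'v] v'j]] := dense_box_at (i := i)
  (a := Num.min (v i) lo - 1) (b := Num.min (v i) lo) (l := m) (h := v)
  ltac:(lra) (fun j ji => (umv j ji).2).
exists u', v'; split=> //.
- split=> [|j ji]; first by move: uu' v'v; rewrite gt_max lt_min => /andP[+ _] /andP[+ _]; lra.
  by have /andP[_ /lt_trans->] := u'j j ji; have /andP[] := v'j j ji.
- split=> r; case: (eqVneq r i) => [->|ri].
  + by move: uu'; rewrite gt_max => /andP[/ltW].
  + by have /andP[/ltW] := u'j r ri.
  + by move: v'v; rewrite lt_min => /andP[/ltW].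
  + by have /andP[_ /ltW] := v'j r ri.
- by move: uu' v'v; rewrite gt_max lt_min => /andP[_ ?] /andP[_ ?].
Qed.

Lemma exists_flip (i : 'I_n) : exists u v, [/\ D u, D v & flip i u v].
Proof.
have [u [v [Du Dv fl _ _]]] :=
  exists_flip_inside (a := [ffun=> 0]) (b := [ffun=> 1]) (i := i) ltac:(by rewrite !ffunE).
by exists u, v.
Qed.

Hypothesis prec_lin : forall k, strict_linear_order_on D (prec k).
Hypothesis prec_real : realizes D prec.

Lemma exists_prec_rev (i : 'I_n) (u v : pt n) :
  D u -> D v -> v i < u i -> exists k, prec k v u.
Proof.
move=> Du Dv vu; apply: NNPP => no_rev.
have uv : u <> v by move=> eq_uv; rewrite eq_uv ltxx in vu.
have [/(_ i)] : prod_lt u v.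
  apply/(prec_real Du Dv) => k; have [_ [_ tot]] := prec_lin k.
  by case: (tot u v Du Dv uv) => // vu'; case: no_rev; exists k.
by rewrite leNgt vu.
Qed.

Lemma prec_of_pt_le k (a b : pt n) : D a -> D b -> pt_le a b -> a <> b -> prec k a b.
Proof. by move=> Da Db ab /(conj ab)/(prec_real Da Db)/(_ k). Qed.

Lemma le_prec_le k (a b u v : pt n) : D a -> D b -> D u -> D v ->
  pt_le a v -> prec k v u -> pt_le u b -> prec k a b.
Proof.
move=> Da Db Du Dv av vu ub; have [_ [tr _]] := prec_lin k.
have au : prec k a u.
  case: (eqVneq a v) => [-> //|/eqP av'].
  exact: (tr a v u Da Dv Du (prec_of_pt_le k Da Dv av av') vu).
case: (eqVneq u b) => [<- //|/eqP ub'].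
exact: (tr a u b Da Du Db au (prec_of_pt_le k Du Db ub ub')).
Qed.

Definition flip_family (x y : 'I_n -> pt n) := forall p,
  [/\ D (x p), D (y p), flip p (x p) (y p) & forall q, q != p -> pt_le (x p) (y q)].

Lemma flip_family_prec_inj x y k p q : flip_family x y ->
  prec k (y p) (x p) -> prec k (y q) (x q) -> p = q.
Proof.
move=> fam yxp yxq; case: (eqVneq p q) => // pq; exfalso.
have [Dxp Dyp _ xpy] := fam p; have [Dxq Dyq _ xqy] := fam q.
have xyp : prec k (x p) (y p). (* x p <= y q <_k x q <= y p *)
  by apply: le_prec_le Dxp Dyp Dxq Dyq (xpy q _) yxq (xqy p pq); rewrite eq_sym.
exact: strict_linear_order_on_asym (prec_lin k) Dxp Dyp xyp yxp.
Qed.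

Lemma flip_family_prec_uniq x y p k k' : flip_family x y ->
  prec k (y p) (x p) -> prec k' (y p) (x p) -> k = k'.
Proof.
move=> fam; apply: (fin_rel_functional (R := fun p k => prec k (y p) (x p))).
  by move=> q; have [Dxq Dyq [yxq _] _] := fam q; exact: exists_prec_rev Dxq Dyq yxq.
by move=> q q' l; exact: flip_family_prec_inj.
Qed.

Lemma exists_flip_family_through (i : 'I_n) (u v : pt n) : D u -> D v -> flip i u v ->
  exists x y, [/\ flip_family x y, x i = u & y i = v].
Proof.
move=> Du Dv fl.
(* x p is taken below xb p and y p above yb p; for p = i these bounds are (u, v). *)
pose xb p := [ffun r => if p == i then u r else if r == p then v r else Num.min (u r) (v r)].
pose yb p := [ffun r => if p == i then v r else if r == p then u r else Num.max (u r) (v r)].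
have xb_le_yb p q : q != p -> pt_le (xb p) (yb q).
  move=> qp r; rewrite !ffunE.
  case: (eqVneq p i) => [pi|_]; case: (eqVneq q i) => [qi|_].
  - by move: qp; rewrite pi qi eqxx.
  - by case: ifP; rewrite ?le_max lexx ?orbT.
  - by case: ifP; rewrite ?ge_min lexx ?orbT.
  - case: (eqVneq r p) => [->|_]; first by rewrite eq_sym (negPf qp) le_max lexx orbT.
    by case: ifP; rewrite ?ge_min ?le_max lexx ?orbT.
have pick p : exists xy : pt n * pt n, [/\ D xy.1, D xy.2, flip p xy.1 xy.2,
    pt_le xy.1 (xb p) /\ pt_le (yb p) xy.2 & p = i -> xy = (u, v)].
  case: (eqVneq p i) => [->|pi].
    by exists (u, v); split=> //; split=> r; rewrite ffunE eqxx.
  have [|x [y [Dx Dy fxy xxb yby]]] := exists_flip_inside (i := p) (a := yb p) (b := xb p).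
    by rewrite !ffunE (negPf pi) eqxx; exact: fl.2 p pi.
  by exists (x, y); split=> // /eqP; rewrite (negPf pi).
have [f fP] := fin_all_exists pick.
exists (fun p => (f p).1), (fun p => (f p).2).
have [_ _ _ _ /(_ erefl) ->] := fP i; split=> // p.
have [Dx Dy fxy [xxb _] _] := fP p; split=> // q qp r.
have [_ _ _ [_ yby] _] := fP q.
exact: le_trans (xxb r) (le_trans (xb_le_yb p q qp r) (yby r)).
Qed.

Lemma flip_prec_uniq (i : 'I_n) (u v : pt n) k k' : D u -> D v -> flip i u v ->
  prec k v u -> prec k' v u -> k = k'.
Proof.
move=> Du Dv fl; have [x [y [fam <- <-]]] := exists_flip_family_through Du Dv fl.
exact: flip_family_prec_uniq.
Qed.

Lemma flip_prec_transfer (i : 'I_n) k (u v u' v' : pt n) :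
  D u -> D v -> flip i u v -> prec k v u ->
  D u' -> D v' -> flip i u' v' -> prec k v' u'.
Proof.
move=> Du Dv fl vu Du' Dv' [v'u' _].
(* (uR, vR) encloses (u, v) and is so wide in coordinate i that some flip (uS, vS)
   lies inside both (uR, vR) and (u', v'); all three share the order reversing (uR, vR). *)
have [uR [vR [DuR DvR flR [uuR vRv] [vRv' u'uR]]]] :=
  exists_flip_outside (v' i) (u' i) fl.
have vRuR : prec k vR uR := le_prec_le DvR DuR Du Dv vRv vu uuR.
pose a := [ffun r => Num.max (vR r) (v' r)]; pose b := [ffun r => Num.min (uR r) (u' r)].
have ab : a i < b i.
  rewrite !ffunE lt_min !gt_max; case: flR => vRuRi _.
  by apply/andP; split; apply/andP; split; lra.
have [uS [vS [DuS DvS flS uSb avS]]] := exists_flip_inside ab.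
have [uSuR uSu'] : pt_le uS uR /\ pt_le uS u'.
  by split=> r; have := uSb r; rewrite ffunE le_min => /andP[].
have [vRvS v'vS] : pt_le vR vS /\ pt_le v' vS.
  by split=> r; have := avS r; rewrite ffunE ge_max => /andP[].
have [k' vSuS] := exists_prec_rev DuS DvS flS.1.
have k'k : k' = k.
  exact: flip_prec_uniq DuR DvR flR (le_prec_le DvR DuR DuS DvS vRvS vSuS uSuR) vRuR.
by rewrite -k'k; exact: le_prec_le Dv' Du' DuS DvS v'vS vSuS uSu'.
Qed.

Definition reverses_flips (i k : 'I_n) :=
  forall u v, D u -> D v -> flip i u v -> prec k v u.

Lemma exists_reverses_flips (i : 'I_n) : exists k, reverses_flips i k.
Proof.
have [u [v [Du Dv fl]]] := exists_flip i.
have [k vu] := exists_prec_rev Du Dv fl.1.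
by exists k => u' v' Du' Dv'; exact: flip_prec_transfer Du Dv fl vu Du' Dv'.
Qed.

Lemma reverses_flips_inj (s : 'I_n -> 'I_n) :
  (forall i, reverses_flips i (s i)) -> injective s.
Proof.
move=> sP i j sij.
have [u [v [Du Dv fl]]] := exists_flip i.
have [x [y [fam _ _]]] := exists_flip_family_through Du Dv fl.
have [Dxi Dyi fli _] := fam i; have [Dxj Dyj flj _] := fam j.
by apply: (flip_family_prec_inj fam (sP i _ _ Dxi Dyi fli)); rewrite sij; exact: sP.
Qed.

Lemma reverses_flips_lt (i k : 'I_n) (a b : pt n) :
  reverses_flips i k -> D a -> D b -> a i < b i -> prec k a b.
Proof.
move=> rev Da Db ab; have [u [v [Du Dv fl ub av]]] := exists_flip_inside ab.
exact: le_prec_le Da Db Du Dv av (rev u v Du Dv fl) ub.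
Qed.

Hypothesis distinct : distinct_coords D.

Lemma reverses_flips_ltE (i k : 'I_n) (a b : pt n) :
  reverses_flips i k -> D a -> D b -> a i < b i <-> prec k a b.
Proof.
move=> rev Da Db; split; first exact: reverses_flips_lt.
move=> ab; case: (ltgtP (a i) (b i)) => // [ba | abi].
  by case: (strict_linear_order_on_asym (prec_lin k) Da Db ab (reverses_flips_lt rev Db Da ba)).
have [irr _] := prec_lin k; case: (eqVneq a b) => [eab | /eqP nab].
  by rewrite eab in ab; case: (irr b Db ab).
by case: (distinct Da Db nab abi).
Qed.

End ProductOrderRealizer.

Theorem lemma6p5 (n : nat) (hn : (2 <= n)%N) (D : pt n -> Prop)
  (hdense : dense_Qn D) (hdist : distinct_coords D)
  (prec : 'I_n -> pt n -> pt n -> Prop)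
  (hlin : forall k, strict_linear_order_on D (prec k))
  (hreal : realizes D prec) :
  exists sigma : 'S_n, forall (i : 'I_n) (a b : pt n), D a -> D b ->
    (a i < b i <-> prec (sigma i) a b).
Proof.
have [s sP] := fin_all_exists (exists_reverses_flips hdense hlin hreal).
exists (perm (reverses_flips_inj hdense hlin hreal sP)) => i a b Da Db.
by rewrite permE; exact: (reverses_flips_ltE hdense hlin hreal hdist (sP i)).
Qed.
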